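(* Let $F$ be an infinite field, let $k\ge 1$, let $\boldsymbol{X}=(X_1,\ldots,X_k)$ be a tuple of pairwise disjoint finite sets of variables, let $f\in F\langle \boldsymbol{X}\rangle = F\langle X_1\rangle\otimes_F\cdots\otimes_F F\langle X_k\rangle$, let $n\ge 1$, and let $L$ be a field extending $F$. Then the following are equivalent: (i) the partially commutative identity $f=0$ holds in $M_n(L)\otimes_F\cdots\otimes_F M_n(L)$ ($k$ factors), i.e. $\widetilde{\boldsymbol{v}}(f)=0$ for every valuation $\boldsymbol{v}=(v_1,\ldots,v_k)$ with $v_i:X_i\to M_n(L)$; (ii) $\Phi_n(f)=0$. Moreover, if $f$ has degree strictly less than $n$, then (i) and (ii) are both equivalent to each of: (iii) $\Psi_n(f)=0$; (iv) $f=0$ in $F\langle \boldsymbol{X}\rangle$.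
   Context: $F\langle X\rangle$ denotes the free $F$-algebra on a set $X$ (polynomials in non-commuting variables from $X$; monomials are words in $X^*$). For a tuple $\boldsymbol{X}=(X_1,\ldots,X_k)$ of pairwise disjoint sets, $F\langle \boldsymbol{X}\rangle := F\langle X_1\rangle\otimes_F\cdots\otimes_F F\langle X_k\rangle$; every element can be written uniquely as a finite $F$-linear combination of distinct monomials $m_1\otimes\cdots\otimes m_k$ with $m_j\in X_j^*$ (so $F\langle\boldsymbol{X}\rangle$ is the free $F$-algebra, i.e. monoid algebra, of $X_1^*\times\cdots\times X_k^*$). The degree of a monomial $m_1\otimes\cdots\otimes m_k$ is $|m_1|+\cdots+|m_k|$, and the degree of a polynomial is the maximum degree of its monomials. A valuation in $(A_1,\ldots,A_k)$ ($F$-algebras) is a tuple $\boldsymbol{v}=(v_1,\ldots,v_k)$ of maps $v_i:X_i\to A_i$; each extends uniquely to an $F$-algebra homomorphism $\widetilde{v_i}:F\langle X_i\rangle\to A_i$, and $\widetilde{\boldsymbol{v}}:=\widetilde{v_1}\otimes\cdots\otimes\widetilde{v_k}:F\langle\boldsymbol{X}\rangle\to A_1\otimes_F\cdots\otimes_F A_k$. Tensor products of matrix algebras are identified with algebras of larger matrices via the Kronecker product: for $a\times a$ matrix $M=(m_{ij})$ and $b\times b$ matrix $N$, $M\otimes N$ is the $ab\times ab$ block matrix with blocks $m_{ij}N$. Generic matrices: for a finite set $X$ and each $x\in X$, introduce commuting indeterminates $t^{(x)}_{ij}$, $1\le i,j\le n$. The generic matrix algebra $F_n\langle X\rangle$ is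 the $F$-algebra of $n\times n$ matrices (with entries polynomials in the $t^{(x)}_{ij}$) generated by the matrices $(t^{(x)}_{ij})_{i,j}$, $x\in X$, and $\Phi^X_n:F\langle X\rangle\to F_n\langle X\rangle$ is the $F$-algebra homomorphism with $\Phi^X_n(x)=(t^{(x)}_{ij})_{i,j}$. Also $\Psi^X_n$ is the $F$-algebra homomorphism from $F\langle X\rangle$ to $n\times n$ matrices over the polynomial ring in the $t^{(x)}_{ij}$ sending $x$ to the matrix whose only nonzero entries are $t^{(x)}_{12},t^{(x)}_{23},\ldots,t^{(x)}_{n-1,n}$ on the superdiagonal (positions $(i,i+1)$). Finally $\Phi_n:=\Phi^{X_1}_n\otimes\cdots\otimes\Phi^{X_k}_n:F\langle\boldsymbol{X}\rangle\to F_n\langle X_1\rangle\otimes\cdots\otimes F_n\langle X_k\rangle$ and $\Psi_n:=\Psi^{X_1}_n\otimes\cdots\otimes\Psi^{X_k}_n$, both with values in $n^k\times n^k$ matrices. *)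

From HB Require Import structures.
From mathcomp Require Import all_boot all_order all_algebra.
From mathcomp Require Import mpoly.
Set Implicit Arguments. Unset Strict Implicit. Unset Printing Implicit Defensive.
Import Order.TTheory GRing.Theory.
Local Open Scope ring_scope.

Definition infinite_type (T : eqType) : Prop := forall s : seq T, exists x : T, x \notin s.

(* Variables: X_i = 'I_(d i) (block i of the tuple X = (X_1,...,X_k));
   the blocks are disjoint by construction (variables are tagged by i). *)

(* Monomials m_1 (x) ... (x) m_k with m_i a word in X_i^* *)
Definition mono (k : nat) (d : 'I_k -> nat) := {dffun forall i : 'I_k, seq 'I_(d i)}.

(* An element of F<X> given as a formal F-linear combination of monomials
   (a list of (coefficient, monomial)); repetitions are allowed and the
   element is determined by the coefficient function [coefp]. *)
Definition pcpoly (F : Type) (k : nat) (d : 'I_k -> nat) := seq (F * mono d).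

Definition coefp (F : nzRingType) k (d : 'I_k -> nat) (f : pcpoly F d) (m : mono d) : F :=
  \sum_(p <- f | p.2 == m) p.1.

Definition pc_zero (F : nzRingType) k (d : 'I_k -> nat) (f : pcpoly F d) : Prop :=
  forall m : mono d, coefp f m = 0.

(* deg f < n  (the zero polynomial has degree -oo) *)
Definition deg_lt (F : nzRingType) k (d : 'I_k -> nat) (f : pcpoly F d) (n : nat) : Prop :=
  forall m : mono d, coefp f m != 0 -> (\sum_(i < k) size (m i) < n)%N.

Definition wordval (R : pzRingType) (n m : nat) (v : 'I_m -> 'M[R]_n) (w : seq 'I_m) : 'M[R]_n :=
  foldr (fun x A => v x *m A) 1%:M w.

(* Kronecker product of k square n x n matrices A_0 (x) ... (x) A_(k-1),
   an n^k x n^k matrix: entry (r,c) is prod_i A_i (r_i, c_i) where r_i is the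
   i-th base-n digit of r (most significant first), i.e. the block convention
   M (x) N = (m_ij N). *)
Definition natentry (R : pzRingType) (n : nat) (A : 'M[R]_n) (a b : nat) : R :=
  match insub a, insub b with
  | Some a', Some b' => A a' b'
  | _, _ => 0
  end.

Definition digit (k n r : nat) (i : 'I_k) : nat := (r %/ n ^ (k.-1 - i)) %% n.

Definition kron (R : pzRingType) (k n : nat) (A : 'I_k -> 'M[R]_n) : 'M[R]_(n ^ k) :=
  \matrix_(r, c) \prod_(i < k) natentry (A i) (digit n r i) (digit n c i).

(* The F-structure on M_n(L) is given by the field embedding iota : F -> L.
   An element sum_p c_p a_(p,1) (x) ... (x) a_(p,k) of the tensor product over F is
   zero iff it is killed by every F-multilinear map (universal property). *)
Definition upd (T : Type) k (A : {ffun 'I_k -> T}) (i : 'I_k) (x : T) : {ffun 'I_k -> T} :=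
  [ffun j => if j == i then x else A j].

Definition multilinear (F L : nzRingType) (iota : F -> L) (n k : nat) (W : lmodType F)
  (mu : {ffun 'I_k -> 'M[L]_n} -> W) : Prop :=
  forall (A : {ffun 'I_k -> 'M[L]_n}) (i : 'I_k) (c : F) (x y : 'M[L]_n),
    mu (upd A i (iota c *: x + y)) = c *: mu (upd A i x) + mu (upd A i y).

Definition tensor_zero (F L : nzRingType) (iota : F -> L) (n k : nat)
  (t : seq (F * {ffun 'I_k -> 'M[L]_n})) : Prop :=
  forall (W : lmodType F) (mu : {ffun 'I_k -> 'M[L]_n} -> W),
    multilinear iota mu -> \sum_(p <- t) p.1 *: mu p.2 = 0.

Definition pcid_holds (F L : nzRingType) (iota : F -> L) (n : nat) k (d : 'I_k -> nat)
  (f : pcpoly F d) : Prop :=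
  forall v : (forall i : 'I_k, 'I_(d i) -> 'M[L]_n),
    tensor_zero iota
      [seq (p.1, [ffun i => wordval (v i) (p.2 i)]) | p : F * mono d <- f].

(* commuting indeterminates t^(x)_(a,b), x in X_i, 1 <= a,b <= n *)
Definition tvar (k : nat) (d : 'I_k -> nat) (n : nat) : finType :=
  {i : 'I_k & ('I_(d i) * 'I_n * 'I_n)%type}.

Definition nvars k (d : 'I_k -> nat) n : nat := #|{: tvar d n}|.

Definition tind k (d : 'I_k -> nat) n (i : 'I_k) (x : 'I_(d i)) (a b : 'I_n) : 'I_(nvars d n) :=
  enum_rank (Tagged (fun j : 'I_k => ('I_(d j) * 'I_n * 'I_n)%type) (x, a, b)).

Definition tpoly (F : nzRingType) k (d : 'I_k -> nat) n := {mpoly F[nvars d n]}.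

Definition genmx (F : nzRingType) k (d : 'I_k -> nat) n (i : 'I_k) (x : 'I_(d i))
  : 'M[tpoly F d n]_n :=
  \matrix_(a, b) 'X_(tind x a b).

Definition supmx (F : nzRingType) k (d : 'I_k -> nat) n (i : 'I_k) (x : 'I_(d i))
  : 'M[tpoly F d n]_n :=
  \matrix_(a, b) (if (b == a.+1 :> nat) then 'X_(tind x a b) else 0).

Definition Phi (F : nzRingType) k (d : 'I_k -> nat) n (f : pcpoly F d) : 'M[tpoly F d n]_(n ^ k) :=
  \sum_(p <- f) (p.1)%:MP *: kron (fun i => wordval (@genmx F k d n i) ((p : F * mono d).2 i)).

Definition Psi (F : nzRingType) k (d : 'I_k -> nat) n (f : pcpoly F d) : 'M[tpoly F d n]_(n ^ k) :=
  \sum_(p <- f) (p.1)%:MP *: kron (fun i => wordval (@supmx F k d n i) ((p : F * mono d).2 i)).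

From Pilot Require Import Defs.
From HB Require Import structures.
From mathcomp Require Import all_boot all_order all_algebra.
From mathcomp Require Import mpoly zify.
Set Implicit Arguments. Unset Strict Implicit. Unset Printing Implicit Defensive.
Import Order.TTheory GRing.Theory.
Local Open Scope ring_scope.

(* A valuation v is a point of the affine space of the commuting variables
   t^(x)_ab, and the entries of the Kronecker products of the v-values of the
   words of f are the entries of Phi_n(f) evaluated at that point.  Testing the
   tensor with the F-multilinear functionals "entry (r,c) of the Kronecker
   product" shows that (i) forces every entry of Phi_n(f) to vanish at every
   point of F^N, hence to be zero since F is infinite.

   Conversely, fix v and an F-multilinear functional mu.  Expanding every slot
   in matrix units and every entry in monomials, and sending a monomial to mu
   of the block-wise v-values of its factors, gives a map which is linear in
   the entries of the Kronecker product.  It agrees with mu after evaluation at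
   v on tuples of matrix units weighted by monomials in the variables of the
   matching block, and both are slot-wise linear, so they agree on the generic
   words; summing over f, mu applied to the value of f is a linear image of
   the entries of Phi_n(f).

   If deg f < n, specialise to the superdiagonal generic matrices: a word of
   length l < n in block i has in row a the single entry (a, a + l), the
   product of the variables along the superdiagonal path it spells.  So
   the coefficient of m in f is a coefficient of the entry of Psi_n(f) in row
   (0,...,0) and column (|m_1|,...,|m_k|), and Psi_n(f) is a specialisation
   of Phi_n(f). *)

(** * Kronecker products of words *)

Lemma natentry_val (R : pzRingType) n (A : 'M[R]_n) (a b : 'I_n) :
  natentry A a b = A a b.
Proof.
rewrite /natentry; case: insubP => [a' _ /val_inj ->|]; last by rewrite ltn_ord.
by case: insubP => [b' _ /val_inj ->|]; last by rewrite ltn_ord.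
Qed.

Lemma natentry_map (R S : pzRingType) (g : {additive R -> S}) n (A : 'M[R]_n) a b :
  natentry (map_mx g A) a b = g (natentry A a b).
Proof.
rewrite /natentry; case: insubP => [a' _ _|_]; last by rewrite raddf0.
by case: insubP => [b' _ _|_]; rewrite ?mxE ?raddf0.
Qed.

Lemma natentryZD (R : pzRingType) n (c : R) (x y : 'M[R]_n) a b :
  natentry (c *: x + y) a b = c * natentry x a b + natentry y a b.
Proof.
rewrite /natentry; case: insubP => [a' _ _|_]; last by rewrite mulr0 addr0.
by case: insubP => [b' _ _|_]; rewrite ?mxE ?mulr0 ?addr0.
Qed.

Lemma eq_wordval (R : pzRingType) n m (v u : 'I_m -> 'M[R]_n) w :
  v =1 u -> wordval v w = wordval u w.
Proof. by move=> vu; elim: w => //= x w ->; rewrite vu. Qed.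

Lemma wordval_map (R S : pzRingType) (g : {rmorphism R -> S}) n m
    (v : 'I_m -> 'M[R]_n) w :
  map_mx g (wordval v w) = wordval (fun x => map_mx g (v x)) w.
Proof.
elim: w => [|x w IHw] /=; first by rewrite map_scalar_mx rmorph1.
by rewrite map_mxM IHw.
Qed.

Lemma eq_kron (R : pzRingType) k n (A B : 'I_k -> 'M[R]_n) : A =1 B -> kron A = kron B.
Proof.
by move=> eq_AB; apply/matrixP => r c; rewrite !mxE; apply: eq_bigr => i _; rewrite eq_AB.
Qed.

Lemma map_kron_sum (R S : comNzRingType) (g : {rmorphism R -> S}) (F : nzRingType)
    (iF : F -> R) k (d : 'I_k -> nat) n (f : pcpoly F d)
    (G : forall i : 'I_k, 'I_(d i) -> 'M[R]_n) :
  map_mx g (\sum_(p <- f) iF p.1 *: kron (fun i => wordval (G i) (p.2 i)))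
  = \sum_(p <- f) g (iF p.1) *: kron (fun i => wordval (fun x => map_mx g (G i x)) (p.2 i)).
Proof.
apply/matrixP => r c; rewrite mxE !summxE rmorph_sum; apply: eq_bigr => p _.
rewrite !mxE rmorphM rmorph_prod; congr (_ * _); apply: eq_bigr => i _.
by rewrite -wordval_map natentry_map.
Qed.

Lemma prod_upd (R : comNzRingType) (T : Type) k (A : {ffun 'I_k -> T}) i z
    (e : 'I_k -> T -> R) :
  \prod_(j < k) e j (upd A i z j) = e i z * \prod_(j < k | j != i) e j (A j).
Proof.
rewrite (bigD1 i) //= ffunE eqxx; congr (_ * _).
by apply: eq_bigr => j ne_ji; rewrite ffunE (negbTE ne_ji).
Qed.

Lemma prod_mpolyX_if (R : comNzRingType) N k (P : pred 'I_k) (m : 'I_k -> 'X_{1..N}) :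
  \prod_(i < k) (if P i then 'X_[m i] else 0 : {mpoly R[N]}) =
  if [forall i, P i] then 'X_[\sum_(i < k) m i] else 0.
Proof.
case: ifPn => [/forallP P_all|/forallPn[i /negbTE Pi]].
  by rewrite -mprodXE; apply: eq_bigr => i _; rewrite P_all.
by rewrite (bigD1 i) //= Pi mul0r.
Qed.

Section Digits.
Local Open Scope nat_scope.
Variable n : nat.
Hypothesis n_gt0 : 0 < n.

Lemma base_repr K r : r < n ^ K -> r = \sum_(j < K) (r %/ n ^ j %% n) * n ^ j.
Proof.
elim: K r => [|K IHK] r lt_r.
  by rewrite big_ord0; move: lt_r; rewrite expn0 ltnS leqn0 => /eqP.
rewrite big_ord_recl /= expn0 divn1 muln1 {1}(divn_eq r n) addnC; congr (_ + _).
have lt_rn : r %/ n < n ^ K by rewrite ltn_divLR // -expnSr.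
rewrite {1}(IHK _ lt_rn) big_distrl /=; apply: eq_bigr => j _.
by rewrite /bump /= add1n expnS divnMA mulnCA mulnC.
Qed.

Lemma digit_lt k r (i : 'I_k) : digit n r i < n.
Proof. by rewrite /digit ltn_mod. Qed.

Lemma digit_inj k r r' : r < n ^ k -> r' < n ^ k ->
  (forall i : 'I_k, digit n r i = digit n r' i) -> r = r'.
Proof.
have repr s : s < n ^ k -> s = \sum_(i < k) digit n s i * n ^ (k.-1 - i).
  move=> lt_s; rewrite {1}(base_repr lt_s) (reindex_inj rev_ord_inj) /=.
  by apply: eq_bigr => i _; rewrite /digit /= (_ : k - i.+1 = k.-1 - i) //; lia.
move=> lt_r lt_r' eq_rr'; rewrite (repr _ lt_r) (repr _ lt_r').
by apply: eq_bigr => i _; rewrite eq_rr'.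
Qed.

Definition digits k (r : 'I_(n ^ k)) : {ffun 'I_k -> 'I_n} :=
  [ffun i => Ordinal (digit_lt r i)].

Lemma digits_surj k (a : {ffun 'I_k -> 'I_n}) :
  exists r : 'I_(n ^ k), forall i, digit n r i = a i.
Proof.
have digits_inj : injective (@digits k).
  move=> r r' /ffunP eq_rr'; apply/val_inj/(digit_inj (ltn_ord r) (ltn_ord r')) => i.
  by have := eq_rr' i; rewrite !ffunE => /(congr1 val).
have [g _ gK] : bijective (@digits k).
  by apply: inj_card_bij digits_inj _; rewrite card_ffun !card_ord.
by exists (g a) => i; have /ffunP/(_ i) := gK a; rewrite ffunE => <-.
Qed.
End Digits.

(** * Polynomials vanishing on an infinite field *)

Lemma base_inj (B K : nat) (a b : nat -> nat) :
  (forall j, j < K -> a j < B)%N -> (forall j, j < K -> b j < B)%N ->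
  (\sum_(j < K) a j * B ^ j = \sum_(j < K) b j * B ^ j)%N ->
  forall j, (j < K)%N -> a j = b j.
Proof.
elim: K a b => [|K IHK] a b lt_a lt_b + j //.
have B_gt0 : (0 < B)%N := leq_ltn_trans (leq0n _) (lt_a 0%N isT).
have sumS (c : nat -> nat) : (\sum_(j < K.+1) c j * B ^ j =
    c 0%N + (\sum_(j < K) c j.+1 * B ^ j) * B)%N.
  rewrite big_ord_recl /= expn0 muln1 big_distrl /=; congr (_ + _)%N.
  by apply: eq_bigr => i _; rewrite /bump /= add1n expnSr mulnA.
rewrite !sumS => eq_ab.
case: j => [|j] lt_j.
  have := congr1 (modn^~ B) eq_ab; rewrite addnC modnMDl addnC modnMDl.
  by rewrite !modn_small ?lt_a ?lt_b.
apply: (IHK (fun j => a j.+1) (fun j => b j.+1)) lt_j.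
- by move=> i; apply: (lt_a i.+1).
- by move=> i; apply: (lt_b i.+1).
by have := congr1 (divn^~ B) eq_ab; rewrite !divnDMl // !divn_small ?lt_a ?lt_b.
Qed.

Section KroneckerSubstitution.
Variables (R : comNzRingType) (N B : nat).

Definition kencode (m : 'X_{1..N}) : nat := (\sum_(j < N) m j * B ^ j)%N.

Definition ksubst (p : {mpoly R[N]}) : {poly R} :=
  mmap (@polyC R) (fun i => 'X^(B ^ i)) p.

Lemma ksubstE p : ksubst p = \sum_(m <- msupp p) p@_m *: 'X^(kencode m).
Proof.
apply: eq_bigr => m _; rewrite /mmap1 /= mul_polyC; congr (_ *: _).
by rewrite -prodrXr; apply: eq_bigr => i _; rewrite -exprM mulnC.
Qed.

Lemma horner_ksubst p (t : R) : (ksubst p).[t] = p.@[fun i => t ^+ (B ^ i)].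
Proof.
rewrite -horner_evalE /ksubst /mmap rmorph_sum; apply: eq_bigr => m _.
rewrite rmorphM /= horner_evalE hornerC /mmap1 rmorph_prod; congr (_ * _).
by apply: eq_bigr => i _; rewrite rmorphXn /= horner_evalE hornerXn.
Qed.

Lemma kencode_inj (m m' : 'X_{1..N}) : (forall i, m i < B)%N -> (forall i, m' i < B)%N ->
  kencode m = kencode m' -> m = m'.
Proof.
move=> lt_m lt_m' eq_mm'; apply/mnmP => j; rewrite !(mnm_nth 0).
apply: (base_inj (K := N) (B := B)) => // [i lt_i|i lt_i|].
- by rewrite -(mnm_nth 0 m (Ordinal lt_i)).
- by rewrite -(mnm_nth 0 m' (Ordinal lt_i)).
by move: eq_mm'; rewrite /kencode; under eq_bigr do rewrite (mnm_nth 0);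
   under [in X in _ = X -> _]eq_bigr do rewrite (mnm_nth 0).
Qed.

Lemma coef_ksubst p m : (forall m' i, m' \in msupp p -> m' i < B)%N ->
  m \in msupp p -> (ksubst p)`_(kencode m) = p@_m.
Proof.
move=> lt_supp supp_m; rewrite ksubstE coef_sum (bigD1_seq m) ?msupp_uniq //=.
rewrite coefZ coefXn eqxx mulr1 big1_seq ?addr0 // => m' /andP[ne_m'm supp_m'].
rewrite coefZ coefXn; case: eqP => [/esym/kencode_inj eq_mm'|]; last by rewrite mulr0.
by move: ne_m'm; rewrite eq_mm' ?eqxx // => i; apply: lt_supp.
Qed.

End KroneckerSubstitution.

Lemma infinite_uniq_seq (T : eqType) : infinite_type T ->
  forall K, exists s : seq T, uniq s /\ size s = K.
Proof.
move=> Tinf; elim=> [|K [s [uniq_s <-]]]; first by exists [::].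
by have [x x_notin_s] := Tinf s; exists (x :: s); rewrite /= x_notin_s uniq_s.
Qed.

Lemma infinite_meval_eq0 (R : idomainType) (Rinf : infinite_type R) N
    (p : {mpoly R[N]}) :
  (forall h : 'I_N -> R, p.@[h] = 0) -> p = 0.
Proof.
move=> p_eval0; set B := msize p.
have lt_supp m i : m \in msupp p -> (m i < B)%N.
  move=> /msize_mdeg_lt; apply: leq_ltn_trans.
  by rewrite mdegE (bigD1 i) //= leq_addr.
have ksubst0 : ksubst B p = 0.
  have [s [uniq_s size_s]] := infinite_uniq_seq Rinf (size (ksubst B p)).
  apply: (roots_geq_poly_eq0 (rs := s)) => //; last by rewrite size_s.
  by apply/allP => t _; rewrite /root horner_ksubst p_eval0.
apply/mpolyP => m; rewrite mcoeff0.
have [supp_m|/memN_msupp_eq0 //] := boolP (m \in msupp p).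
by rewrite -(coef_ksubst lt_supp supp_m) ksubst0 coef0.
Qed.


(** * From identities to generic matrices *)

Definition lmod_via (R S : nzRingType) (f : {rmorphism R -> S}) : Type := S.

Section LmodVia.
Variables (R S : nzRingType) (f : {rmorphism R -> S}).

HB.instance Definition _ := GRing.Zmodule.on (lmod_via f).

Definition via_scale (c : R) (x : lmod_via f) : lmod_via f := (f c * (x : S) : S).

Fact via_scaleA a b (x : lmod_via f) : via_scale a (via_scale b x) = via_scale (a * b) x.
Proof. by rewrite /via_scale rmorphM mulrA. Qed.
Fact via_scale1 : left_id 1 via_scale.
Proof. by move=> x; rewrite /via_scale rmorph1 mul1r. Qed.
Fact via_scaleDr : right_distributive via_scale +%R.
Proof. by move=> a x y; rewrite /via_scale mulrDr. Qed.
Fact via_scaleDl (x : lmod_via f) : {morph via_scale^~ x : a b / a + b}.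
Proof. by move=> a b; rewrite /via_scale rmorphD mulrDl. Qed.

HB.instance Definition _ := GRing.Zmodule_isLmodule.Build R (lmod_via f)
  via_scaleA via_scale1 via_scaleDr via_scaleDl.

End LmodVia.

Lemma kron_entry_multilinear (F : nzRingType) (L : comNzRingType)
    (iota : {rmorphism F -> L}) n k (r c : 'I_(n ^ k)) :
  multilinear iota (fun A : {ffun 'I_k -> 'M[L]_n} => (kron A r c : lmod_via iota)).
Proof.
move=> A i a x y; rewrite !mxE.
rewrite !(prod_upd _ _ _ (fun j B => natentry B (digit n r j) (digit n c j))).
by rewrite natentryZD /GRing.scale /= /via_scale mulrDl mulrA.
Qed.

Definition genval (F : nzRingType) k (d : 'I_k -> nat) n (h : 'I_(nvars d n) -> F)
    (i : 'I_k) (x : 'I_(d i)) : 'M[F]_n :=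
  \matrix_(a, b) h (tind x a b).

Lemma pcid_Phi (F : fieldType) (Finf : infinite_type F) (L : comNzRingType)
    (iota : {rmorphism F -> L}) k (d : 'I_k -> nat) n (f : pcpoly F d) :
  pcid_holds iota n f -> Phi n f = 0.
Proof.
move=> f_id; apply/matrixP => r c; rewrite [RHS]mxE.
apply: (infinite_meval_eq0 Finf) => h; apply: (fmorph_inj iota); rewrite rmorph0.
pose v i x := map_mx iota (genval h (i := i) x).
transitivity ((map_mx (iota \o meval h) (Phi n f)) r c); first by rewrite mxE.
rewrite map_kron_sum summxE; apply: etrans (f_id v _ _ (kron_entry_multilinear iota r c)).
rewrite big_map; apply: eq_bigr => p _.
rewrite mxE /= mevalC /GRing.scale /= /via_scale; congr (_ * _).
rewrite !mxE; apply: eq_bigr => i _; rewrite ffunE; congr natentry; apply: eq_wordval => x.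
by apply/matrixP => a b; rewrite !mxE /= mevalXU.
Qed.

(** * From generic matrices to identities *)

Section SlotLinear.
Variables (R : pzRingType) (V : zmodType) (W : lmodType R) (act : R -> V -> V).

Inductive act_span (P : V -> Prop) : V -> Prop :=
  | act_span0 : act_span P 0
  | act_spanS c x y : P x -> act_span P y -> act_span P (act c x + y).

Lemma act_spanD P x y : act_span P x -> act_span P y -> act_span P (x + y).
Proof.
move=> + span_y; elim=> [|c u w Pu _ IHw]; first by rewrite add0r.
by rewrite -addrA; apply: act_spanS.
Qed.

Lemma act_span_sum P (I : Type) (r : seq I) (Q : pred I) (g : I -> V) :
  (forall i, Q i -> act_span P (g i)) -> act_span P (\sum_(i <- r | Q i) g i).
Proof.
move=> span_g; elim: r => [|i r IHr]; first by rewrite big_nil; apply: act_span0.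
by rewrite big_cons; case: ifP => Qi //; apply: act_spanD => //; apply: span_g.
Qed.

Lemma act_span1 P c x : P x -> act_span P (act c x).
Proof. by move=> Px; rewrite -[act c x]addr0; apply: act_spanS => //; apply: act_span0. Qed.

Variable k : nat.

Definition slot_linear (mu : {ffun 'I_k -> V} -> W) :=
  (forall A i c x y, mu (upd A i (act c x + y)) = c *: mu (upd A i x) + mu (upd A i y))
  /\ (forall A i, mu (upd A i 0) = 0).

Lemma upd_id (T : Type) (A : {ffun 'I_k -> T}) i : upd A i (A i) = A.
Proof. by apply/ffunP => j; rewrite ffunE; case: eqP => // ->. Qed.

(* Induction on the number of slots in P-form; in the next slot both maps are
   linear, so it suffices to treat its generators. *)
Lemma slot_linear_eq (mu1 mu2 : {ffun 'I_k -> V} -> W) (P : 'I_k -> V -> Prop) :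
  slot_linear mu1 -> slot_linear mu2 ->
  (forall A : {ffun 'I_k -> V}, (forall i, P i (A i)) -> mu1 A = mu2 A) ->
  forall A : {ffun 'I_k -> V}, (forall i, act_span (P i) (A i)) -> mu1 A = mu2 A.
Proof.
move=> [lin1 zero1] [lin2 zero2] eq_gen.
suff eq_upto j (A : {ffun 'I_k -> V}) : (forall i : 'I_k, j <= i -> P i (A i))%N ->
    (forall i : 'I_k, i < j -> act_span (P i) (A i))%N -> mu1 A = mu2 A.
  by move=> A span_A; apply: (eq_upto k) => // i; rewrite leqNgt ltn_ord.
elim: j A => [|j IHj] A P_A span_A; first by apply: eq_gen => i; apply: P_A.
have [lt_jk|le_kj] := ltnP j k; last first.
  apply: IHj => i lt_ij; last by apply: span_A; apply: ltn_trans lt_ij _.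
  by have := leq_trans (ltn_ord i) le_kj; rewrite ltnNge lt_ij.
pose j' : 'I_k := Ordinal lt_jk.
have span_j : act_span (P j') (A j') by apply: span_A.
rewrite -(upd_id A j'); elim: span_j => [|c x y Px _ IHy]; first by rewrite zero1 zero2.
rewrite lin1 lin2 IHy; congr (_ *: _ + _); apply: IHj => i le_ji; rewrite ffunE.
  by case: eqP => [->//|/eqP ne_ij]; apply: P_A; move: ne_ij; rewrite -val_eqE /=; lia.
by case: eqP => [eq_ij|_]; [move: le_ji; rewrite eq_ij ltnn | apply/span_A/ltnW].
Qed.

End SlotLinear.

Section MonomialExtension.
Variables (R : nzRingType) (N : nat) (W : lmodType R) (G : 'X_{1..N} -> W).

Definition mlinext (p : {mpoly R[N]}) : W := \sum_(m <- msupp p) p@_m *: G m.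

Lemma mlinextE (p : {mpoly R[N]}) K :
  (msize p <= K)%N -> mlinext p = \sum_(m : 'X_{1..N < K}) p@_m *: G m.
Proof.
move=> le_pK; rewrite /mlinext (ssrcomplements.big_mksub 'X_{1..N < K}) ?msupp_uniq //=.
  by rewrite big_rmcond //= => m /memN_msupp_eq0 ->; rewrite scale0r.
by move=> m /msize_mdeg_lt /leq_trans; apply.
Qed.

Lemma mlinextZD c p q : mlinext (c *: p + q) = c *: mlinext p + mlinext q.
Proof.
set K := (msize p + msize q + msize (c *: p + q))%N.
rewrite !(mlinextE (K := K)) ?/K; try lia.
rewrite scaler_sumr -big_split /=; apply: eq_bigr => m _.
by rewrite mcoeffD mcoeffZ scalerDl scalerA.
Qed.

Lemma mlinext0 : mlinext 0 = 0.
Proof. by rewrite /mlinext msupp0 big_nil. Qed.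

Lemma mlinextX m : mlinext 'X_[m] = G m.
Proof. by rewrite /mlinext msuppX big_seq1 mcoeffX eqxx scale1r. Qed.

Lemma mlinext_sum (I : Type) (r : seq I) (c : I -> R) (X : I -> {mpoly R[N]}) :
  mlinext (\sum_(i <- r) (c i)%:MP * X i) = \sum_(i <- r) c i *: mlinext (X i).
Proof.
elim: r => [|i r IHr]; first by rewrite !big_nil mlinext0.
by rewrite !big_cons mul_mpolyC mlinextZD IHr.
Qed.

End MonomialExtension.


Lemma prod_delta_mx (R : comNzRingType) N k n (m : 'I_k -> 'X_{1..N})
    (a0 b0 a b : {ffun 'I_k -> 'I_n}) :
  \prod_(i < k) ('X_[m i] *: delta_mx (a0 i) (b0 i) : 'M[{mpoly R[N]}]_n) (a i) (b i) =
  if (a == a0) && (b == b0) then 'X_[\sum_(i < k) m i] else 0.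
Proof.
rewrite (eq_bigr (fun i => if (a i == a0 i) && (b i == b0 i) then 'X_[m i] else 0)).
  rewrite prod_mpolyX_if; congr (if _ then _ else _).
  apply/forallP/andP => [eq_ab|[/eqP-> /eqP->] i]; last by rewrite !eqxx.
  by split; apply/eqP/ffunP => i; case/andP: (eq_ab i) => /eqP ea /eqP eb; rewrite ?ea ?eb.
by move=> i _; rewrite !mxE; case: ifP; rewrite ?mulr1 ?mulr0.
Qed.

Section Blocks.
Variables (F : nzRingType) (k : nat) (d : 'I_k -> nat) (n : nat).
Local Notation N := (nvars d n).
Local Notation tp := (tpoly F d n).

Lemma tindK i (x : 'I_(d i)) (a b : 'I_n) :
  enum_val (tind x a b) = Tagged (fun j : 'I_k => ('I_(d j) * 'I_n * 'I_n)%type) (x, a, b).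
Proof. exact: enum_rankK. Qed.

Lemma tag_tind i (x : 'I_(d i)) (a b : 'I_n) : tag (enum_val (tind x a b)) = i.
Proof. by rewrite tindK. Qed.

Lemma tind_inj i (x y : 'I_(d i)) (a b a' b' : 'I_n) : tind x a b = tind y a' b' -> x = y.
Proof.
move=> /enum_rank_inj eq_xy.
have := congr1 (tagged_as (Tagged (fun j : 'I_k => ('I_(d j) * 'I_n * 'I_n)%type) (x, a, b))) eq_xy.
by rewrite !tagged_asE => -[].
Qed.

Definition mnm_in_block (i : 'I_k) (m : 'X_{1..N}) : Prop :=
  forall j, (m j != 0)%N -> tag (enum_val j) = i.

Definition in_block (i : 'I_k) (q : tp) : Prop :=
  forall m, m \in msupp q -> mnm_in_block i m.

Lemma in_block_nat i (b : bool) : in_block i b%:R.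
Proof.
case: b => m; last by rewrite msupp0.
by rewrite msupp1 inE => /eqP-> j; rewrite mnm0E.
Qed.

Lemma in_blockD i p q : in_block i p -> in_block i q -> in_block i (p + q).
Proof. by move=> Bp Bq m /msuppD_le; rewrite mem_cat => /orP[/Bp|/Bq]. Qed.

Lemma in_blockM i p q : in_block i p -> in_block i q -> in_block i (p * q).
Proof.
move=> Bp Bq m /msuppM_le /allpairsP[[m1 m2] [/= supp1 supp2 ->]] j.
rewrite mnmDE; case: (eqVneq (m1 j) 0%N) => [->|]; last by move/(Bp _ supp1 j).
by rewrite add0n; apply: Bq.
Qed.

Lemma in_block_sum i (I : Type) (r : seq I) (g : I -> tp) :
  (forall x, in_block i (g x)) -> in_block i (\sum_(x <- r) g x).
Proof.
move=> Bg; elim: r => [|x r IHr]; last by rewrite big_cons; apply: in_blockD.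
by rewrite big_nil => m; rewrite msupp0.
Qed.

Lemma in_blockX i (x : 'I_(d i)) (a b : 'I_n) : in_block i 'X_(tind x a b).
Proof.
move=> m; rewrite msuppX inE => /eqP-> j; rewrite mnm1E.
by case: (tind x a b =P j) => [<- _|//]; rewrite tag_tind.
Qed.

Lemma in_block_wordval i (w : seq 'I_(d i)) a b :
  in_block i ((wordval (@Defs.genmx F k d n i) w) a b).
Proof.
elim: w a b => [|x w IHw] a b /=; first by rewrite mxE; apply: in_block_nat.
rewrite mxE; apply: in_block_sum => c; apply: in_blockM => //.
by rewrite mxE; apply: in_blockX.
Qed.

Definition mpoly_act (c : F) (B : 'M[tp]_n) : 'M[tp]_n := c%:MP *: B.

Definition block_atom (i : 'I_k) (B : 'M[tp]_n) : Prop :=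
  exists a b m, mnm_in_block i m /\ B = 'X_[m] *: delta_mx a b.

Lemma act_span_in_block i (B : 'M[tp]_n) :
  (forall a b, in_block i (B a b)) -> act_span mpoly_act (block_atom i) B.
Proof.
move=> B_block; rewrite (matrix_sum_delta B).
apply: act_span_sum => a _; apply: act_span_sum => b _.
rewrite {1}(mpolyE (B a b)) scaler_suml big_seq; apply: act_span_sum => m supp_m.
rewrite -mul_mpolyC -scalerA; apply: act_span1.
by exists a, b, m; split => //; apply: (B_block a b).
Qed.

End Blocks.

Section GenericValuation.
Variables (F L : comNzRingType) (iota : {rmorphism F -> L}).
Variables (k : nat) (d : 'I_k -> nat) (n : nat) (v : forall i : 'I_k, 'I_(d i) -> 'M[L]_n).
Local Notation N := (nvars d n).
Local Notation tp := (tpoly F d n).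

Definition tval (j : 'I_N) : L :=
  let t := enum_val j in v (tagged t).1.1 (tagged t).1.2 (tagged t).2.

Definition evalv : {rmorphism tp -> L} := mmap iota tval.

Lemma evalv_genmx i (x : 'I_(d i)) : map_mx evalv (@Defs.genmx F k d n i x) = v x.
Proof. by apply/matrixP => a b; rewrite !mxE /evalv /= mmapX mmap1U /tval tindK. Qed.

Variables (W : lmodType F) (mu : {ffun 'I_k -> 'M[L]_n} -> W).
Hypothesis mu_multilinear : multilinear iota mu.

Definition mrestr (i : 'I_k) (M : 'X_{1..N}) : 'X_{1..N} :=
  [multinom (if tag (enum_val j) == i then M j else 0%N) | j < N].

Lemma mrestr_sum (m : 'I_k -> 'X_{1..N}) i :
  (forall j, mnm_in_block j (m j)) -> mrestr i (\sum_(j < k) m j)%MM = m i.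
Proof.
move=> m_block; apply/mnmP => t; rewrite mnmE mnm_sumE.
case: eqP => [tag_t|tag_t].
  rewrite (bigD1 i) //= big1 ?addn0 // => j ne_ji.
  case: (eqVneq (m j t) 0%N) => // /m_block eq_tj.
  by rewrite -eq_tj tag_t eqxx in ne_ji.
by case: (eqVneq (m i t) 0%N) => // /m_block.
Qed.

Definition mu_mnm (a b : {ffun 'I_k -> 'I_n}) (M : 'X_{1..N}) : W :=
  mu [ffun i => mmap1 tval (mrestr i M) *: delta_mx (a i) (b i)].

(* Depends on the [A i] only through the entries of their Kronecker product. *)
Definition mu_lin (A : {ffun 'I_k -> 'M[tp]_n}) : W :=
  \sum_(a : {ffun 'I_k -> 'I_n}) \sum_(b : {ffun 'I_k -> 'I_n})
     mlinext (mu_mnm a b) (\prod_(i < k) A i (a i) (b i)).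

Definition mu_ev (A : {ffun 'I_k -> 'M[tp]_n}) : W := mu [ffun i => map_mx evalv (A i)].

Lemma mu_upd0 (A : {ffun 'I_k -> 'M[L]_n}) i : mu (upd A i 0) = 0.
Proof. by have := mu_multilinear A i (-1) 0 0; rewrite scaler0 addr0 scaleN1r addNr. Qed.

Lemma mu_lin_slot_linear : slot_linear (@mpoly_act F k d n) mu_lin.
Proof.
have prodE (A : {ffun 'I_k -> 'M[tp]_n}) i z (a b : {ffun 'I_k -> 'I_n}) :=
  prod_upd A i z (fun j (B : 'M[tp]_n) => B (a j) (b j)).
split => [A i c x y|A i].
  rewrite /mu_lin scaler_sumr -big_split; apply: eq_bigr => a _ /=.
  rewrite scaler_sumr -big_split; apply: eq_bigr => b _ /=.
  by rewrite !prodE /mpoly_act !mxE mulrDl -mulrA mul_mpolyC mlinextZD.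
rewrite /mu_lin big1 // => a _; rewrite big1 // => b _.
by rewrite prodE mxE mul0r mlinext0.
Qed.

Lemma map_upd (A : {ffun 'I_k -> 'M[tp]_n}) i z :
  [ffun j => map_mx evalv (upd A i z j)] =
  upd [ffun j => map_mx evalv (A j)] i (map_mx evalv z).
Proof. by apply/ffunP => j; rewrite !ffunE; case: eqP => // _; rewrite ffunE. Qed.

Lemma mu_ev_slot_linear : slot_linear (@mpoly_act F k d n) mu_ev.
Proof.
split => [A i c x y|A i]; rewrite /mu_ev !map_upd; last by rewrite map_mx0 mu_upd0.
rewrite -mu_multilinear; congr (mu (upd _ i _)).
by apply/matrixP => a b; rewrite !mxE rmorphD rmorphM /= mmapC.
Qed.

Lemma mu_lin_atoms (A : {ffun 'I_k -> 'M[tp]_n}) :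
  (forall i, block_atom i (A i)) -> mu_lin A = mu_ev A.
Proof.
move=> A_atoms.
have /fin_all_exists[u u_spec] : forall i, exists u : 'I_n * 'I_n * 'X_{1..N},
    mnm_in_block i u.2 /\ A i = 'X_[u.2] *: delta_mx u.1.1 u.1.2.
  by move=> i; have [a [b [m spec]]] := A_atoms i; exists (a, b, m).
pose a0 : {ffun 'I_k -> 'I_n} := [ffun i => (u i).1.1].
pose b0 : {ffun 'I_k -> 'I_n} := [ffun i => (u i).1.2].
have A_prod (a b : {ffun 'I_k -> 'I_n}) : \prod_(i < k) A i (a i) (b i) =
    if (a == a0) && (b == b0) then 'X_[\sum_(i < k) (u i).2] else 0.
  by rewrite -prod_delta_mx; apply: eq_bigr => i _; rewrite (u_spec i).2 !ffunE.
rewrite /mu_lin (bigD1 a0) //= [X in _ + X]big1 ?addr0 => [|a ne_a]; last first.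
  by apply: big1 => b _; rewrite A_prod (negbTE ne_a) mlinext0.
rewrite (bigD1 b0) //= [X in _ + X]big1 ?addr0 => [|b ne_b]; last first.
  by rewrite A_prod eqxx (negbTE ne_b) mlinext0.
rewrite A_prod !eqxx mlinextX /mu_mnm /mu_ev; congr mu; apply/ffunP => i.
rewrite !ffunE mrestr_sum => [|j]; last exact: (u_spec j).1.
by apply/matrixP => a b; rewrite (u_spec i).2 !mxE rmorphM /= mmapX rmorph_nat.
Qed.

Lemma mu_wordval (m : mono d) :
  mu [ffun i => wordval (@v i) (m i)] =
  mu_lin [ffun i => wordval (@Defs.genmx F k d n i) (m i)].
Proof.
symmetry; rewrite (slot_linear_eq mu_lin_slot_linear mu_ev_slot_linear mu_lin_atoms).
  rewrite /mu_ev; congr mu; apply/ffunP => i; rewrite !ffunE wordval_map.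
  by apply: eq_wordval => x; apply: evalv_genmx.
by move=> i; rewrite ffunE; apply: act_span_in_block => a b; apply: in_block_wordval.
Qed.

Lemma Phi_eq0_multilinear (n_gt0 : (0 < n)%N) (f : pcpoly F d) :
  Phi n f = 0 -> \sum_(p <- f) p.1 *: mu [ffun i => wordval (@v i) (p.2 i)] = 0.
Proof.
move=> Phi0; under eq_bigr do rewrite mu_wordval /mu_lin scaler_sumr.
rewrite exchange_big /=; apply: big1 => a _.
under eq_bigr do rewrite scaler_sumr.
rewrite exchange_big /=; apply: big1 => b _.
have [r r_a] := digits_surj n_gt0 a; have [c c_b] := digits_surj n_gt0 b.
rewrite -mlinext_sum; transitivity (mlinext (mu_mnm a b) (Phi n f r c)).
  congr mlinext; rewrite summxE; apply: eq_bigr => p _; rewrite !mxE; congr (_ * _).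
  by apply: eq_bigr => i _; rewrite !ffunE r_a c_b natentry_val.
by rewrite Phi0 mxE mlinext0.
Qed.
End GenericValuation.

Lemma Phi_pcid (F L : comNzRingType) (iota : {rmorphism F -> L}) k (d : 'I_k -> nat) n
    (n_gt0 : (0 < n)%N) (f : pcpoly F d) :
  Phi n f = 0 -> pcid_holds iota n f.
Proof. by move=> Phi0 v W mu mu_ml; rewrite big_map; apply: Phi_eq0_multilinear. Qed.


(** * Small degree: superdiagonal generic matrices *)

Section Superdiagonal.
Variables (F : comNzRingType) (k : nat) (d : 'I_k -> nat) (n : nat).
Local Notation N := (nvars d n).
Local Notation tp := (tpoly F d n).

Definition supsub (j : 'I_N) : tp :=
  let t := tagged (enum_val j) in if t.2 == t.1.2.+1 :> nat then 'X_j else 0.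

Definition supsubst : {rmorphism tp -> tp} := mmap (@mpolyC N F) supsub.

Lemma supsubstC c : supsubst c%:MP = c%:MP.
Proof. exact: mmapC. Qed.

Lemma map_supsubst_genmx i (x : 'I_(d i)) :
  map_mx supsubst (@Defs.genmx F k d n i x) = @supmx F k d n i x.
Proof. by apply/matrixP => a b; rewrite !mxE /supsubst /= mmapX mmap1U /supsub tindK. Qed.

Lemma Phi_eq0_Psi (f : pcpoly F d) : Phi n f = 0 -> Psi n f = 0.
Proof.
move=> /(congr1 (map_mx supsubst)); rewrite map_mx0 => <-.
rewrite map_kron_sum; apply: eq_bigr => p _; rewrite supsubstC.
apply: (congr1 (GRing.scale _)); apply: eq_kron => i.
by apply: eq_wordval => x; rewrite map_supsubst_genmx.
Qed.

End Superdiagonal.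

Section SuperdiagonalPaths.
Variables (F : comNzRingType) (k : nat) (d : 'I_k -> nat) (n : nat).
Local Notation N := (nvars d n.+1).

Fixpoint path_mnm (i : 'I_k) (a : nat) (w : seq 'I_(d i)) : 'X_{1..N} :=
  if w is x :: w' then (U_(tind x (inord a) (inord a.+1)) + path_mnm a.+1 w')%MM
  else 0%MM.

Lemma path_mnm_out i a (w : seq 'I_(d i)) (j : 'I_N) :
  tag (enum_val j) != i -> path_mnm a w j = 0%N.
Proof.
move=> tag_j; elim: w a => [|x w IHw] a /=; first by rewrite mnm0E.
rewrite mnmDE IHw addn0 mnm1E; case: eqP => // eq_j.
by rewrite -eq_j tag_tind eqxx in tag_j.
Qed.

Lemma path_mnm_below i a (w : seq 'I_(d i)) (j : 'I_N) :
  (val (tagged (enum_val j)).1.2 < a)%N -> (a + size w <= n)%N -> path_mnm a w j = 0%N.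
Proof.
elim: w a => [|x w IHw] a lt_ja le_wn /=; first by rewrite mnm0E.
rewrite mnmDE IHw ?addn0; [|exact: ltnW|by move: le_wn => /=; lia].
rewrite mnm1E; case: eqP => // eq_j; move: lt_ja; rewrite -eq_j tindK /= inordK ?ltnn //.
by move: le_wn => /=; lia.
Qed.

Lemma path_mnm_inj i a (w w' : seq 'I_(d i)) : (a + size w <= n)%N ->
  size w = size w' -> path_mnm a w = path_mnm a w' -> w = w'.
Proof.
elim: w w' a => [|x w IHw] [|y w'] a //= le_wn [size_ww'] eq_path.
pose j : 'I_N := tind x (inord a) (inord a.+1).
have below (u : seq 'I_(d i)) : size u = size w -> path_mnm a.+1 u j = 0%N.
  move=> size_u; apply: path_mnm_below; rewrite ?size_u ?tindK /= ?inordK //; lia.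
have eq_yx : y = x.
  have /mnmP/(_ j) := eq_path; rewrite !mnmDE !below // !mnm1E eqxx.
  by case: eqP => // /tind_inj.
move: eq_path; rewrite eq_yx => /addmI eq_path; congr (_ :: _).
by apply: IHw eq_path => //; lia.
Qed.

Lemma wordval_supmx i (w : seq 'I_(d i)) (a b : 'I_n.+1) :
  (wordval (@supmx F k d n.+1 i) w) a b =
  if val b == (a + size w)%N then 'X_[path_mnm a w] else 0.
Proof.
elim: w a => [|x w IHw] a /=.
  by rewrite mxE addn0 mpolyX0 eq_sym val_eqE; case: (b == a).
rewrite mxE; have [lt_an|le_na] := ltnP a n.
  pose a' : 'I_n.+1 := Ordinal (lt_an : (a.+1 < n.+1)%N).
  rewrite (bigD1 a') //= big1 ?addr0 => [|c ne_ca]; last first.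
    rewrite mxE; case: eqP => [eq_c|]; last by rewrite mul0r.
    by move: ne_ca; rewrite -val_eqE /= eq_c eqxx.
  rewrite mxE eqxx IHw /= addSnnS; case: ifP => _; last by rewrite mulr0.
  by rewrite -mpolyXD inord_val (_ : inord a.+1 = a') //; apply: val_inj; rewrite /= inordK.
rewrite big1 => [|c _]; last first.
  rewrite mxE; case: eqP => [eq_c|]; last by rewrite mul0r.
  by have := ltn_ord c; rewrite eq_c; lia.
by case: eqP => // eq_b; have := ltn_ord b; rewrite eq_b; lia.
Qed.

Lemma sum_path_mnm_inj (m m' : mono d) :
  (forall i, size (m i) <= n)%N -> (forall i, size (m' i) = size (m i)) ->
  (\sum_(i < k) path_mnm 0 (m' i))%MM = (\sum_(i < k) path_mnm 0 (m i))%MM -> m' = m.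
Proof.
move=> le_mn size_m' eq_sum; apply/ffunP => i.
apply: (path_mnm_inj (a := 0)) => //; first by rewrite add0n size_m'.
apply/mnmP => j.
have [tag_j|tag_j] := eqVneq (tag (enum_val j)) i; last by rewrite !path_mnm_out.
have coord (u : mono d) : (\sum_(i0 < k) path_mnm 0 (u i0))%MM j = path_mnm 0 (u i) j.
  rewrite mnm_sumE (bigD1 i) //= big1 ?addn0 // => i' ne_i'i.
  by apply: path_mnm_out; rewrite tag_j eq_sym.
by rewrite -!coord eq_sum.
Qed.

Lemma coef_Psi_path (f : pcpoly F d) (m : mono d) : (forall i, size (m i) <= n)%N ->
  exists r c : 'I_(n.+1 ^ k),
    (Psi n.+1 f r c)@_(\sum_(i < k) path_mnm 0 (m i))%MM = Defs.coefp f m.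
Proof.
move=> le_mn.
have [r r_0] := digits_surj (ltn0Sn n) [ffun i : 'I_k => ord0 : 'I_n.+1].
have [c c_m] := digits_surj (ltn0Sn n) [ffun i => inord (size (m i)) : 'I_n.+1].
exists r, c; rewrite summxE raddf_sum /= /Defs.coefp [RHS]big_mkcond; apply: eq_bigr => p _.
rewrite mxE mcoeffCM mxE.
rewrite (eq_bigr (fun i => if size (m i) == size (p.2 i) then 'X_[path_mnm 0 (p.2 i)] else 0))
  => [|i _]; last by rewrite r_0 c_m !ffunE natentry_val wordval_supmx /= inordK ?ltnS.
rewrite prod_mpolyX_if; have [->|ne_pm] := eqVneq p.2 m.
  by rewrite (_ : [forall i, _] = true) ?mcoeffX ?eqxx ?mulr1 //; apply/forallP => i.
case: forallP => [size_p|]; last by rewrite mcoeff0 mulr0.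
rewrite mcoeffX; case: eqP => [eq_sum|]; last by rewrite mulr0.
have size_pm i : size (p.2 i) = size (m i) by apply/esym/eqP.
by rewrite (sum_path_mnm_inj le_mn size_pm eq_sum) eqxx in ne_pm.
Qed.

Lemma Psi_eq0_pc_zero (f : pcpoly F d) : Psi n.+1 f = 0 -> deg_lt f n.+1 -> pc_zero f.
Proof.
move=> Psi0 deg_f m; have [//|/deg_f lt_m] := eqVneq (Defs.coefp f m) 0.
have [|r [c <-]] := coef_Psi_path f (m := m); last by rewrite Psi0 mxE mcoeff0.
by move=> i; rewrite -ltnS; apply: leq_ltn_trans lt_m; rewrite (bigD1 i) //= leq_addr.
Qed.

End SuperdiagonalPaths.

Lemma sum_group_snd (A T : eqType) (V : nmodType) (s : seq (A * T)) (G : A * T -> V) :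
  \sum_(p <- s) G p = \sum_(m <- undup (map snd s)) \sum_(p <- s | p.2 == m) G p.
Proof.
rewrite [RHS](exchange_big_dep predT) //=; apply: eq_big_seq => p s_p.
rewrite (eq_bigl (fun m => m == p.2)) => [|m]; last by rewrite eq_sym.
by rewrite -big_filter filter_pred1_uniq ?undup_uniq ?big_seq1 // mem_undup map_f.
Qed.

Lemma pc_zero_Phi (F : nzRingType) k (d : 'I_k -> nat) n (f : pcpoly F d) :
  pc_zero f -> Phi n f = 0.
Proof.
move=> f0; rewrite /Phi sum_group_snd big1 // => m _.
rewrite (eq_bigr (fun p => p.1%:MP *: kron (fun i => wordval (@Defs.genmx F k d n i) (m i)))).
  by rewrite -scaler_suml -rmorph_sum -/(Defs.coefp f m) f0 scale0r.
by move=> p /eqP->.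
Qed.

Theorem proposition1 (F : fieldType) (Finf : infinite_type F)
  (k : nat) (hk : (0 < k)%N) (d : 'I_k -> nat) (f : pcpoly F d)
  (n : nat) (hn : (0 < n)%N) (L : fieldType) (iota : {rmorphism F -> L}) :
  (pcid_holds iota n f <-> Phi n f = 0) /\
  (deg_lt f n ->
     (pcid_holds iota n f <-> Psi n f = 0) /\
     (pcid_holds iota n f <-> pc_zero f)).
Proof.
have Phi_iff : pcid_holds iota n f <-> Phi n f = 0.
  by split; [exact: pcid_Phi | exact: Phi_pcid].
split=> [|deg_f]; first exact: Phi_iff.
have Psi_pc : Psi n f = 0 -> pc_zero f.
  by case: n hn deg_f {Phi_iff} => // n' _ deg_f Psi0; exact: Psi_eq0_pc_zero Psi0 deg_f.
have Phi_Psi := @Phi_eq0_Psi _ _ d n f.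
have pc_Phi := @pc_zero_Phi _ _ d n f.
split; split.
- by move=> f_id; exact: Phi_Psi (Phi_iff.1 f_id).
- by move=> Psi0; exact: Phi_iff.2 (pc_Phi (Psi_pc Psi0)).
- by move=> f_id; exact: Psi_pc (Phi_Psi (Phi_iff.1 f_id)).
- by move=> f0; exact: Phi_iff.2 (pc_Phi f0).
Qed.
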